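(* Let $D$ be a transportability diagram and let $G$ be the subgraph obtained by removing all transportability nodes $T$ from $D$. Let $X,Y,Z$ be disjoint sets of vertices of $D$ containing no transportability nodes. Then $X$ and $Y$ are d-separated by $Z\cup T'$ in $D$ for every $T'\subseteq T$ if and only if $X$ and $Y$ are d-separated by $Z$ in $G$.
   Context: A (semi-Markovian) graph $G=(V,E)$ has directed edges forming an acyclic graph and bidirected edges $V_j\leftrightarrow V_k$. A transportability diagram $D$ is such a graph $G$ together with a set $T$ of additional vertices (transportability nodes), each having exactly one incident edge, a directed edge $T_j\to V_j$ with $V_j\in V$. d-separation: a path is blocked by a set $Z$ if it contains a non-collider $M\in Z$ (patterns $I\to M\to J$, $I\leftrightarrow M\to J$, $I\leftarrow M\to J$ and their reversals) or a collider $M$ (patterns $I\to M\leftarrow J$, $I\leftrightarrow M\leftarrow J$, $I\leftrightarrow M\leftrightarrow J$) with $\mathrm{De}(M)\cap Z=\emptyset$, where $\mathrm{De}(M)$ is $M$ together with its descendants; disjoint $X,Y$ are d-separated by $Z$ if every path between $X$ and $Y$ is blocked by $Z$. *)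

From mathcomp Require Import all_boot.
Set Implicit Arguments. Unset Strict Implicit. Unset Printing Implicit Defensive.

(* A mixed graph on a finite vertex type: directed edges [gdir a b] means
   a -> b, bidirected edges [gbi a b] means a <-> b. *)
Record mgraph (V : finType) := MGraph { gdir : rel V; gbi : rel V }.

Definition dacyclic (V : finType) (e : rel V) : Prop :=
  forall x y, e x y -> ~~ connect e y x.

Definition semi_markovian (V : finType) (g : mgraph V) : Prop :=
  [/\ dacyclic (gdir g), symmetric (gbi g) & irreflexive (gbi g)].

(* kinds of edges traversed along a path from the current vertex a to the next b:
   EF : a -> b,  EB : a <- b,  EBi : a <-> b *)
Inductive ekind := EF | EB | EBi.

Definition edge_of (V : finType) (g : mgraph V) (k : ekind) (a b : V) : bool :=
  match k with EF => gdir g a b | EB => gdir g b a | EBi => gbi g a b end.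

(* a path is a start vertex x together with a list of steps (edge kind, next vertex) *)
Fixpoint valid_steps (V : finType) (g : mgraph V) (x : V) (s : seq (ekind * V)) : bool :=
  match s with
  | [::] => true
  | (k, y) :: s' => edge_of g k x y && valid_steps g y s'
  end.

Definition is_path (V : finType) (g : mgraph V) (x : V) (s : seq (ekind * V)) : bool :=
  valid_steps g x s && uniq (x :: map snd s).

(* arrowhead at the middle vertex on the incoming edge (prev ? m) *)
Definition head_in (k : ekind) : bool := match k with EB => false | _ => true end.
(* arrowhead at the middle vertex on the outgoing edge (m ? next) *)
Definition head_out (k : ekind) : bool := match k with EF => false | _ => true end.

Definition collider (kin kout : ekind) : bool := head_in kin && head_out kout.

Definition De (V : finType) (g : mgraph V) (m : V) : {set V} :=
  [set y | connect (gdir g) m y].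

Definition blocks_at (V : finType) (g : mgraph V) (Z : {set V})
    (kin : ekind) (m : V) (kout : ekind) : bool :=
  if collider kin kout then De g m :&: Z == set0 else m \in Z.

Fixpoint blocked_from (V : finType) (g : mgraph V) (Z : {set V})
    (kin : ekind) (m : V) (s : seq (ekind * V)) : bool :=
  match s with
  | [::] => false
  | (k, y) :: s' => blocks_at g Z kin m k || blocked_from g Z k y s'
  end.

Definition blocked (V : finType) (g : mgraph V) (Z : {set V}) (x : V)
    (s : seq (ekind * V)) : bool :=
  match s with
  | [::] => false
  | (k, y) :: s' => blocked_from g Z k y s'
  end.

Definition dsep (V : finType) (g : mgraph V) (X Y Z : {set V}) : Prop :=
  forall (x : V) (s : seq (ekind * V)),
    x \in X -> last x (map snd s) \in Y -> is_path g x s -> blocked g Z x s.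

Definition transp_diagram (W : finType) (g : mgraph W) (T : {set W}) : Prop :=
  semi_markovian g /\
  forall t, t \in T ->
    exists2 v, v \notin T &
      [/\ gdir g t v,
          forall u, gdir g t u -> u = v,
          forall u, ~~ gdir g u t,
          forall u, ~~ gbi g t u
        & forall u, ~~ gbi g u t].

Definition remove_nodes (W : finType) (g : mgraph W) (T : {set W}) :
    mgraph {x : W | x \notin T} :=
  MGraph (fun a b : {x : W | x \notin T} => gdir g (val a) (val b))
         (fun a b : {x : W | x \notin T} => gbi g (val a) (val b)).

Definition restrict (W : finType) (T : {set W}) (A : {set W}) :
    {set {x : W | x \notin T}} :=
  [set v : {x : W | x \notin T} | val v \in A].

From mathcomp Require Import all_boot.
Set Implicit Arguments. Unset Strict Implicit. Unset Printing Implicit Defensive.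

(* A transportability node has a single neighbour, so it can only be an
   endpoint of a simple path; hence the paths between X and Y in D are exactly
   the paths of G.  It has no parents either, so it is never a descendant of a
   vertex of G; hence adding T' to Z changes neither the non-colliders in the
   conditioning set nor the colliders with a descendant in it.  Every path is
   therefore blocked by Z :|: T' in D iff it is blocked by Z in G. *)

Definition adjacent (V : finType) (g : mgraph V) (a b : V) : bool :=
  [|| gdir g a b, gdir g b a, gbi g a b | gbi g b a].

Lemma adjacentC (V : finType) (g : mgraph V) (a b : V) :
  adjacent g a b = adjacent g b a.
Proof.
by rewrite /adjacent; case: (gdir g a b); case: (gdir g b a);
   case: (gbi g a b); case: (gbi g b a).
Qed.

Lemma edge_of_adjacent (V : finType) (g : mgraph V) k (a b : V) :
  edge_of g k a b -> adjacent g a b.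
Proof. by case: k => /= e; rewrite /adjacent e ?orbT. Qed.

Lemma is_path_cons (V : finType) (g : mgraph V) (x y : V) k s :
  is_path g x ((k, y) :: s) =
  [&& edge_of g k x y, x \notin y :: map snd s & is_path g y s].
Proof.
by rewrite /is_path /=; case: edge_of; case: (x \in _); case: valid_steps.
Qed.

Lemma transp_parentless (W : finType) (D : mgraph W) (T : {set W}) u t :
  transp_diagram D T -> t \in T -> ~~ gdir D u t.
Proof. by case=> _ tD /tD [v _ []]. Qed.

Lemma transp_adjacent_eq (W : finType) (D : mgraph W) (T : {set W}) t u w :
  transp_diagram D T -> t \in T -> adjacent D t u -> adjacent D t w -> u = w.
Proof.
case=> _ tD /tD [v _ [_ childE noparent nobi_l nobi_r]].
have adjE z : adjacent D t z -> z = v.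
  by rewrite /adjacent (negbTE (noparent z)) (negbTE (nobi_l z))
             (negbTE (nobi_r z)) !orbF => /childE.
by move=> /adjE -> /adjE ->.
Qed.

Section RemoveNodes.

Variables (W : finType) (D : mgraph W) (T : {set W}).

Local Notation V := {x : W | x \notin T}.
Local Notation G := (remove_nodes D T).

Hypothesis parentless : forall u t, t \in T -> ~~ gdir D u t.
Hypothesis lone_neighbour :
  forall t u w, t \in T -> adjacent D t u -> adjacent D t w -> u = w.

Definition lift_steps (s : seq (ekind * V)) : seq (ekind * W) :=
  [seq (p.1, val p.2) | p <- s].

Lemma map_snd_lift_steps s : map snd (lift_steps s) = map val (map snd s).
Proof. by rewrite -!map_comp. Qed.

Lemma last_lift_steps (x : V) s :
  last (val x) (map snd (lift_steps s)) = val (last x (map snd s)).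
Proof. by rewrite map_snd_lift_steps last_map. Qed.

Lemma valid_steps_lift (x : V) s :
  valid_steps D (val x) (lift_steps s) = valid_steps G x s.
Proof. by elim: s x => [|[k y] s IHs] x //=; rewrite IHs; case: k. Qed.

Lemma is_path_lift (x : V) s : is_path D (val x) (lift_steps s) = is_path G x s.
Proof.
rewrite /is_path valid_steps_lift map_snd_lift_steps.
by rewrite -[_ :: map val _]/(map val (x :: _)) (map_inj_uniq val_inj).
Qed.

Lemma lift_steps_avoiding (s : seq (ekind * W)) :
  all (fun p => p.2 \notin T) s -> exists s', s = lift_steps s'.
Proof.
elim: s => [|[k y] s IHs] /=; first by exists [::].
by case/andP=> yT /IHs [s' ->]; exists ((k, Sub y yT) :: s').
Qed.

Lemma path_avoids (x : W) s : is_path D x s ->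
  x \notin T -> last x (map snd s) \notin T -> all (fun p => p.2 \notin T) s.
Proof.
elim: s x => [|[k y] s IHs] x //=; rewrite is_path_cons.
case/and3P=> exy xNs pys xT lT.
have yT : y \notin T.
  case: s {IHs} xNs pys lT => [|[k' w] s] //= xNs pys _.
  apply/negP=> yT; move: pys; rewrite is_path_cons => /andP [eyw _].
  have xw : x = w.
    by apply: lone_neighbour yT _ (edge_of_adjacent eyw);
       rewrite adjacentC (edge_of_adjacent exy).
  by move: xNs; rewrite xw !inE eqxx orbT.
by rewrite yT (IHs y).
Qed.

Lemma connect_parentless (x y : W) :
  connect (gdir D) x y -> x \notin T -> y \notin T.
Proof.
case/connectP=> p; case/lastP: p => [|p z] /=; first by move=> _ ->.
rewrite rcons_path last_rcons => /andP [_ ez] -> _.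
by apply/negP=> /(parentless (last x p)); rewrite ez.
Qed.

Lemma connect_remove_nodes (m y : V) :
  connect (gdir G) m y = connect (gdir D) (val m) (val y).
Proof.
apply/idP/idP; case/connectP=> p.
  elim: p m => [_ _ -> //|z p IHp] m /= /andP [emz pz] yE.
  exact: connect_trans (connect1 emz) (IHp z pz yE).
elim: p m => [_ _ /val_inj -> //|z p IHp] m /= /andP [emz pz] yE.
have zT : z \notin T by apply: connect_parentless (connect1 emz) (valP m).
have mz : gdir G m (Sub z zT) by [].
exact: connect_trans (connect1 mz) (IHp (Sub z zT) pz yE).
Qed.

Section Conditioning.

Variables (Z T' : {set W}).
Hypothesis subT' : T' \subset T.

Lemma mem_setU_restrict (m : V) : (val m \in Z :|: T') = (m \in restrict T Z).
Proof.
rewrite !inE; case: (val m \in Z) => //=.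
by apply/negP=> /(subsetP subT'); rewrite (negbTE (valP m)).
Qed.

Lemma blocks_at_remove_nodes kin (m : V) kout :
  blocks_at D (Z :|: T') kin (val m) kout = blocks_at G (restrict T Z) kin m kout.
Proof.
rewrite /blocks_at; case: collider; last exact: mem_setU_restrict.
rewrite !setI_eq0 !disjoints_subset; apply/subsetP/subsetP => disj y.
  rewrite /De inE connect_remove_nodes in_setC -mem_setU_restrict => my.
  by rewrite -in_setC; apply: disj; rewrite /De inE.
rewrite /De inE => my.
have yT := connect_parentless my (valP m).
rewrite -[y]/(val (Sub y yT : V)) in_setC mem_setU_restrict -in_setC.
by apply: disj; rewrite /De inE connect_remove_nodes.
Qed.

Lemma blocked_lift (x : V) s :
  blocked D (Z :|: T') (val x) (lift_steps s) = blocked G (restrict T Z) x s.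
Proof.
case: s => [|[k y] s] //=.
by elim: s k y => [|[k' y'] s IHs] k y //=; rewrite IHs blocks_at_remove_nodes.
Qed.

Lemma dsep_remove_nodes (X Y : {set W}) :
  [disjoint X & T] -> [disjoint Y & T] ->
  dsep D X Y (Z :|: T') <-> dsep G (restrict T X) (restrict T Y) (restrict T Z).
Proof.
move=> dXT dYT; split.
  move=> sepD x s xX lY pxs.
  rewrite -blocked_lift; apply: sepD.
  - by move: xX; rewrite inE.
  - by rewrite last_lift_steps; move: lY; rewrite inE.
  - by rewrite is_path_lift.
move=> sepG x s xX lY pxs.
have xT : x \notin T by rewrite (disjointFr dXT xX).
have lT : last x (map snd s) \notin T by rewrite (disjointFr dYT lY).
have [s' sE] := lift_steps_avoiding (path_avoids pxs xT lT).
subst s.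
rewrite -[x]/(val (Sub x xT : V)) blocked_lift.
apply: sepG.
- by rewrite inE.
- by rewrite inE -last_lift_steps.
- by rewrite -is_path_lift.
Qed.

End Conditioning.

End RemoveNodes.

Theorem lemma1 (W : finType) (D : mgraph W) (T X Y Z : {set W}) :
  transp_diagram D T ->
  [disjoint X & T] -> [disjoint Y & T] -> [disjoint Z & T] ->
  [disjoint X & Y] -> [disjoint X & Z] -> [disjoint Y & Z] ->
  (forall T' : {set W}, T' \subset T -> dsep D X Y (Z :|: T')) <->
  dsep (remove_nodes D T) (restrict T X) (restrict T Y) (restrict T Z).
Proof.
move=> tD dXT dYT _ _ _ _.
have parentless u t : t \in T -> ~~ gdir D u t by apply: transp_parentless.
have lone_neighbour t u w : t \in T -> adjacent D t u -> adjacent D t w -> u = w.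
  exact: transp_adjacent_eq.
have sepE (T' : {set W}) : T' \subset T -> _ :=
  fun subT' => dsep_remove_nodes parentless lone_neighbour Z subT' dXT dYT.
split=> [sepD | sepG T' subT']; first exact/(sepE _ (sub0set T))/sepD/sub0set.
exact/sepE.
Qed.
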